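(* Let $m\ge 1$ and $n=2m$. For each integer $k$ with $0\le k\le 2^m$ define $$S_k=\{\,j\in\mathbb{Z}/(2^m-1)\mathbb{Z}\;:\;\mathrm{wt}_n\big((2^m+1)j+(2^m-1)k\big)<m\,\}.$$ Then $|S_k|\le 2^{m-1}$ for every $0\le k\le 2^m$, and equality $|S_k|=2^{m-1}$ holds if and only if $m$ is odd and $k=0$.
   Context: For a positive integer $n$ and an integer $u$, $\mathrm{wt}_n(u)$ denotes the number of 1's in the binary expansion of the unique representative of $u$ modulo $2^n-1$ lying in $\{0,1,\ldots,2^n-2\}$. (Note that $\mathrm{wt}_n((2^m+1)j+(2^m-1)k)$ depends only on $j$ modulo $2^m-1$ when $k$ is fixed.) *)

From mathcomp Require Import all_boot.
Set Implicit Arguments. Unset Strict Implicit. Unset Printing Implicit Defensive.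

(* Number of 1's in the binary expansion of u (fuel u suffices since
   u has at most u bits). *)
Fixpoint popcount_aux (fuel u : nat) : nat :=
  match fuel with
  | 0 => 0
  | f.+1 => odd u + popcount_aux f u./2
  end.
Definition popcount (u : nat) : nat := popcount_aux u u.

(* wt_n(u): weight of the representative of u modulo 2^n - 1 in
   {0, ..., 2^n - 2}.  Only used on nonnegative arguments here. *)
Definition wt (n u : nat) : nat := popcount (u %% (2 ^ n - 1)).

(* S_k, with j in Z/(2^m-1)Z represented by its representative in 'I_(2^m-1). *)
Definition Sk (m k : nat) : {set 'I_(2 ^ m - 1)} :=
  [set j : 'I_(2 ^ m - 1) | wt (2 * m) ((2 ^ m + 1) * j + (2 ^ m - 1) * k) < m].

From mathcomp Require Import all_boot zify.
Set Implicit Arguments. Unset Strict Implicit. Unset Printing Implicit Defensive.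

(* Write X = 2^m, n = 2m, N = 2^n - 1 = (X - 1)(X + 1), and
   code_k(j) = (X + 1) j + (X - 1) k, so that S_k = {j | wt_n(code_k j) < m}.

   The proof pairs j with its opposite -j modulo X - 1.  One checks that
     code_k(-j) + X * code_k(j) = 0  (mod N).
   Multiplication by X = 2^m is a cyclic shift of n-bit words, so it
   preserves wt_n; and two nonzero residues summing to 0 mod N have
   complementary bit patterns, so their weights add up to n.  Hence
   wt_n(code_k j) + wt_n(code_k(-j)) = 2m unless code_k(j) = 0 mod N,
   which happens only for j = k = 0.  A general counting lemma for such
   "balanced" weights under an involution then gives
     2 |S_k| + #{j | wt_n(code_k j) = m} = 2^m - 1 + [k = 0],
   whence |S_k| <= 2^(m-1), with equality iff k = 0 and no j has weight
   exactly m.  For k = 0 the weight of code_0(j) = (X + 1) j is 2 wt(j),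
   which equals m for some j exactly when m is even. *)

Lemma popcount_aux_fuel f u : u <= f -> popcount_aux f u = popcount u.
Proof.
have step g v : v <= g -> popcount_aux g.+1 v = popcount_aux g v.
  elim: g v => [|g IH] v vg; first by move: vg; rewrite leqn0 => /eqP ->.
  rewrite [RHS]/= -IH //; have := odd_double_half v; lia.
move=> uf; rewrite /popcount -(subnK uf).
by elim: (f - u) => [|d IH] //; rewrite addSn step // leq_addl.
Qed.

Lemma popcountE u : popcount u = odd u + popcount u./2.
Proof.
case: u => [|v] //; rewrite /popcount /= popcount_aux_fuel //.
by have := odd_double_half v.+1; lia.
Qed.

Lemma popcount_bit_double (b : bool) u : popcount (b + u.*2) = b + popcount u.
Proof. by rewrite popcountE half_bit_double oddD odd_double addbF; case: b. Qed.

Lemma popcount_concat s a b : b < 2 ^ s ->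
  popcount (a * 2 ^ s + b) = popcount a + popcount b.
Proof.
elim: s b => [|s IH] b; first by rewrite ltnS leqn0 muln1 => /eqP ->; rewrite !addn0.
have b2 := odd_double_half b; rewrite expnS -?muln2 => bs.
have -> : a * (2 * 2 ^ s) + b = odd b + (a * 2 ^ s + b./2).*2 by lia.
by rewrite popcount_bit_double IH ?[popcount b]popcountE; lia.
Qed.

Lemma popcount_complement s x : x < 2 ^ s ->
  popcount (2 ^ s - 1 - x) + popcount x = s.
Proof.
elim: s x => [|s IH] x; first by rewrite ltnS leqn0 => /eqP ->.
have x2 := odd_double_half x; rewrite expnS -?muln2 => xs.
have -> : 2 * 2 ^ s - 1 - x = ~~ odd x + (2 ^ s - 1 - x./2).*2.
  by move: xs x2; rewrite -!muln2; case: (odd x) => /=; lia.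
rewrite popcount_bit_double [popcount x]popcountE.
have half_lt : x./2 < 2 ^ s by lia.
by have := IH _ half_lt; case: (odd x) => /=; lia.
Qed.

(* Doubling modulo 2^n - 1 is a cyclic rotation of n-bit words, hence
   preserves wt_n. *)
Lemma wt_double n x : wt n (2 * x) = wt n x.
Proof.
rewrite /wt -modnMmr; case: n => [|n].
  by rewrite !modn0 mul2n (popcount_bit_double false).
set N := 2 ^ n.+1 - 1.
have N_gt0 : 0 < N by rewrite subn_gt0 -{1}(expn0 2) ltn_exp2l.
move: (x %% N) (ltn_pmod x N_gt0) => r rN.
(* Split the residue r < 2^(n+1) into its top bit b and an n-bit word y. *)
have top_le1 : r %/ 2 ^ n <= 1.
  by rewrite leqNgt leq_divRL ?expn_gt0 //; move: rN; rewrite /N expnS; lia.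
have [b top_eq] : exists b : bool, r %/ 2 ^ n = b.
  by case: (r %/ 2 ^ n) top_le1 => [|[|]] //; [exists false | exists true].
move: (divn_eq r (2 ^ n)) (ltn_pmod r (expn_gt0 2 n)) rN.
rewrite top_eq; clear top_eq top_le1; move: (r %% 2 ^ n) => y -> y_lt rN.
(* Doubling moves b from the top to the bottom: 2r = b N + (b + 2y). *)
have -> : 2 * (b * 2 ^ n + y) = b * N + (b + y.*2).
  by case: b rN; rewrite /N expnS; lia.
rewrite modnMDl modn_small; last by case: b rN; rewrite /N expnS; lia.
by rewrite popcount_bit_double popcount_concat //; case: b rN.
Qed.

Lemma wt_mul_exp2 n s x : wt n (2 ^ s * x) = wt n x.
Proof. by elim: s => [|s IH]; rewrite ?mul1n // expnS -mulnA wt_double. Qed.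

(* If x + y = 0 and x <> 0 modulo 2^n - 1, the residues of x and y are
   bitwise complements in n bits, so their weights sum to n. *)
Lemma wt_opposite n x y : 0 < n -> 2 ^ n - 1 %| x + y -> ~~ (2 ^ n - 1 %| x) ->
  wt n x + wt n y = n.
Proof.
move=> n_gt0; set N := 2 ^ n - 1 => dvd_xy ndvd_x.
have N_gt0 : 0 < N by rewrite subn_gt0 -{1}(expn0 2) ltn_exp2l.
have x_gt0 : 0 < x %% N by rewrite lt0n -/(dvdn N x).
have xN := ltn_pmod x N_gt0; have yN := ltn_pmod y N_gt0.
have /dvdnP[q xy_eq] : N %| x %% N + y %% N by rewrite /dvdn modnDm.
rewrite /wt -/N; have {q xy_eq} -> : y %% N = N - x %% N.
  by move: xy_eq; case: q => [|[|q]]; lia.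
by rewrite addnC /N popcount_complement //; lia.
Qed.

(* Counting under an involution g on a g-stable set D along which the
   weights w x and w (g x) always average to c: g exchanges the elements
   of weight below c with those of weight above c. *)
Lemma card_balanced (T : finType) (g : T -> T) (w : T -> nat) (c : nat)
    (D : {set T}) :
  involutive g -> (forall x, x \in D -> g x \in D) ->
  (forall x, x \in D -> w x + w (g x) = 2 * c) ->
  2 * #|[set x in D | w x < c]| + #|[set x in D | w x == c]| = #|D|.
Proof.
move=> gK gD wg.
set L := [set x in D | w x < c]; set E := [set x in D | w x == c].
set H := [set x in D | c < w x].
have gL : g @: L = H.
  apply/setP => x; rewrite inE; apply/imsetP/andP => [[y]|[xD cx]].
    by rewrite inE => /andP[yD wy] ->; have := wg y yD; split; [exact: gD | lia].
  exists (g x); last by rewrite gK.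
  by rewrite inE gD //=; have := wg x xD; lia.
have LH : #|H| = #|L| by rewrite -gL card_imset //; exact: inv_inj.
have DL : D :&: L = L by apply/setIidPr/subsetP => x; rewrite inE => /andP[].
have DE : (D :\: L) :&: E = E.
  by apply/setP => x; rewrite !inE; case: (x \in D); case: ltngtP.
have DH : (D :\: L) :\: E = H.
  by apply/setP => x; rewrite !inE; case: (x \in D); case: ltngtP.
rewrite -(cardsID L D) -(cardsID E (D :\: L)) DL DE DH LH; lia.
Qed.

Definition ord_opp n (j : 'I_n) : 'I_n :=
  Ordinal (ltn_pmod (n - j) (leq_ltn_trans (leq0n j) (ltn_ord j))).

Lemma ord_opp_eq0 n (j : 'I_n) : (val (ord_opp j) == 0) = (val j == 0).
Proof.
rewrite /=; have := ltn_ord j; case: (posnP j) => [->|j_gt0 jn]; first by rewrite subn0 modnn.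
by rewrite modn_small; lia.
Qed.

Lemma ord_oppK n : involutive (@ord_opp n).
Proof.
move=> j; apply: val_inj => /=; have := ltn_ord j.
case: (posnP j) => [->|j_gt0 jn]; first by rewrite subn0 modnn subn0 modnn.
by rewrite (modn_small (_ : n - j < n)) ?subKn ?modn_small //; lia.
Qed.

Definition code (m k j : nat) : nat := (2 ^ m + 1) * j + (2 ^ m - 1) * k.

Lemma exp2_double_pred m : 2 ^ (2 * m) - 1 = (2 ^ m - 1) * (2 ^ m + 1).
Proof. by rewrite mul2n -addnn expnD; case: (2 ^ m) (expn_gt0 2 m) => // X _; nia. Qed.

Lemma code_pair_dvd m k j : j < 2 ^ m - 1 ->
  2 ^ (2 * m) - 1 %| code m k ((2 ^ m - 1 - j) %% (2 ^ m - 1)) + 2 ^ m * code m k j.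
Proof.
rewrite exp2_double_pred /code; set M := 2 ^ m - 1 => j_lt.
have -> : 2 ^ m = M.+1 by rewrite /M; have := expn_gt0 2 m; lia.
set i := (M - j) %% M.
have -> : (M.+1 + 1) * i + M * k + M.+1 * ((M.+1 + 1) * j + M * k)
        = (i + j + M * (j + k)) * (M.+1 + 1) by nia.
apply: dvdn_mul => //; rewrite dvdn_addl ?dvdn_mulr // /dvdn modnDml subnK ?modnn //.
exact: ltnW.
Qed.

(* code_k(j) vanishes modulo 2^(2m) - 1 only in the trivial case j = k = 0;
   this uses that 2^m - 1 is odd and that k <= 2^m. *)
Lemma code_dvd_eq0 m k j : j < 2 ^ m - 1 -> k <= 2 ^ m ->
  2 ^ (2 * m) - 1 %| code m k j -> j = 0 /\ k = 0.
Proof.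
rewrite exp2_double_pred /code; set M := 2 ^ m - 1 => j_lt k_le dvd_code.
have X_eq : 2 ^ m = M.+1 by rewrite /M; have := expn_gt0 2 m; lia.
have M_odd : odd M.
  have m_gt0 : 0 < m by case: (posnP m) j_lt => [m0|//]; rewrite /M m0.
  by have := congr1 odd X_eq; rewrite oddX /= eqn0Ngt m_gt0 /= => /esym/negbFE.
have j0 : j = 0.
  have : M %| j * 2.
    rewrite -(dvdn_addr _ (dvdn_mulr (j + k) (dvdnn M))).
    suff -> : M * (j + k) + j * 2 = (2 ^ m + 1) * j + M * k.
      exact: dvdn_trans (dvdn_mulr _ _) dvd_code.
    by rewrite X_eq; nia.
  rewrite Gauss_dvdl ?coprimen2 //; case: (posnP j) => // j_gt0.
  by move=> /(dvdn_leq j_gt0); lia.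
split=> //; move: dvd_code; rewrite j0 muln0 add0n dvdn_pmul2l; last lia.
by case: (posnP k) => // k_gt0 /(dvdn_leq k_gt0); lia.
Qed.

Lemma wt_code_opp m k j : j < 2 ^ m - 1 -> k <= 2 ^ m -> (0 < j) || (0 < k) ->
  wt (2 * m) (code m k ((2 ^ m - 1 - j) %% (2 ^ m - 1))) + wt (2 * m) (code m k j) = 2 * m.
Proof.
move=> j_lt k_le jk_gt0; rewrite -(wt_mul_exp2 _ m (code m k j)).
have m_gt0 : 0 < m by case: (posnP m) j_lt => [->|].
apply: wt_opposite; [lia | exact: code_pair_dvd | apply/negP].
have i_lt : (2 ^ m - 1 - j) %% (2 ^ m - 1) < 2 ^ m - 1 by rewrite ltn_pmod //; lia.
move=> /(code_dvd_eq0 i_lt k_le) [i0 k0]; move: jk_gt0 i0; rewrite k0 orbF.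
by move=> j_gt0; rewrite modn_small; lia.
Qed.

(* For k = 0, code_0(j) = j 2^m + j is two copies of the m-bit word j. *)
Lemma wt_code0 m j : j < 2 ^ m - 1 -> wt (2 * m) (code m 0 j) = 2 * popcount j.
Proof.
move=> j_lt; rewrite /wt exp2_double_pred /code muln0 addn0.
have -> : (2 ^ m + 1) * j = j * 2 ^ m + j by lia.
rewrite modn_small ?popcount_concat; [lia | lia | ].
by move: j_lt; case: (2 ^ m) => // X; nia.
Qed.

Definition balanced_set m k : {set 'I_(2 ^ m - 1)} :=
  [set j : 'I_(2 ^ m - 1) | wt (2 * m) (code m k j) == m].

(* The counting identity behind both claims: pair each nonzero j with -j
   and treat j = 0 (in S_k iff k = 0, balanced iff k <> 0) separately. *)
Lemma card_Sk_balance m k : 0 < m -> k <= 2 ^ m ->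
  2 * #|Sk m k| + #|balanced_set m k| = 2 ^ m - 1 + (k == 0).
Proof.
move=> m_gt0 k_le; have M_gt0 : 0 < 2 ^ m - 1 by rewrite subn_gt0 -{1}(expn0 2) ltn_exp2l.
pose z := Ordinal M_gt0; pose w (j : 'I_(2 ^ m - 1)) := wt (2 * m) (code m k j).
have z_eq (x : 'I_(2 ^ m - 1)) : (x == z) = (val x == 0) by [].
have opp_D (x : 'I_(2 ^ m - 1)) : x \in [set~ z] -> ord_opp x \in [set~ z].
  by rewrite !in_setC1 !z_eq ord_opp_eq0.
have opp_w x : x \in [set~ z] -> w x + w (ord_opp x) = 2 * m.
  by rewrite in_setC1 z_eq -lt0n => x_gt0; rewrite addnC wt_code_opp ?x_gt0.
have := card_balanced (@ord_oppK _) opp_D opp_w; rewrite cardsC1 card_ord.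
(* The point j = 0 is its own opposite. *)
have w_z : w z = if k == 0 then 0 else m.
  case: (posnP k) => [k0|k_gt0]; first by rewrite /w /code k0 /= !muln0 /wt mod0n.
  have := wt_code_opp (ltn_ord z) k_le; rewrite k_gt0 orbT subn0 modnn /=.
  by rewrite -/(w z) => /(_ isT); lia.
rewrite (cardsD1 z (Sk m k)) (cardsD1 z (balanced_set m k)) !inE -/(w z) w_z.
have -> : Sk m k :\ z = [set x in [set~ z] | w x < m].
  by apply/setP => x; rewrite !inE andbC.
have -> : balanced_set m k :\ z = [set x in [set~ z] | w x == m].
  by apply/setP => x; rewrite !inE andbC.
by case: (k == 0); rewrite /= ?ltnn ?m_gt0 ?(gtn_eqF m_gt0); lia.
Qed.

(* For k = 0 a balanced j would have 2 wt(j) = m; conversely for m even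
   j = 2^(m/2) - 1 is balanced. *)
Lemma balanced_set0_empty m : 0 < m ->
  (#|balanced_set m 0| == 0) = odd m.
Proof.
move=> m_gt0; rewrite cards_eq0; case: (boolP (odd m)) => [m_odd|m_even].
  apply/eqP/setP => j; rewrite !inE wt_code0 //.
  by apply/negbTE; apply: contraL m_odd => /eqP <-; rewrite oddM.
apply/negbTE/set0Pn; set h := m./2.
have m_eq : m = h.*2 by rewrite -[LHS]odd_double_half (negbTE m_even).
have j_lt : 2 ^ h - 1 < 2 ^ m - 1.
  have : 2 ^ h < 2 ^ m by rewrite ltn_exp2l; lia.
  by have := expn_gt0 2 h; lia.
exists (Ordinal j_lt); rewrite inE wt_code0 //.
by have := popcount_complement (expn_gt0 2 h); rewrite subn0 addn0 => ->; lia.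
Qed.

Theorem proposition2 (m : nat) (hm : 1 <= m) :
  (forall k : nat, k <= 2 ^ m -> #|Sk m k| <= 2 ^ (m - 1)) /\
  (forall k : nat, k <= 2 ^ m -> (#|Sk m k| = 2 ^ (m - 1) <-> odd m /\ k = 0)).
Proof.
have two_pow : 2 ^ m = 2 * 2 ^ (m - 1) by rewrite -expnS subn1 prednK.
have half_gt0 : 0 < 2 ^ (m - 1) by rewrite expn_gt0.
split=> k /(card_Sk_balance hm).
  by case: (k == 0) => /=; lia.
case: (posnP k) => [->|k_gt0] /=; last by split=> [|[]]; lia.
rewrite -(balanced_set0_empty hm); move: #|balanced_set m 0| => E balance.
by case: E balance => [|E] balance /=; split=> [|[]] //; lia.
Qed.
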